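(* Let $f:2^V\to\mathbb{R}_+$ be a nonnegative supermodular function that is $r$-decomposable (not necessarily monotone), and let $k$ be an integer with $r<k\le n-1$. Run the following algorithm: $S_n\gets V$; for $i=n,\dots,k+1$, choose $v_i\in\arg\min_{v\in S_i}f(v\mid S_i\setminus\{v\})$ and set $S_{i-1}\gets S_i\setminus\{v_i\}$; output whichever of $S_k$ and $\emptyset$ has the larger function value. This algorithm achieves an approximation ratio of $O(n^{r-1}/k^{r-1})$ for the $\underline{k}$SPM problem on $f$.
   Context: $V$ is a finite set with $n=|V|$; $f(v\mid S)=f(S\cup\{v\})-f(S)$. Supermodular: $f(A)+f(B)\le f(A\cup B)+f(A\cap B)$. $f$ is $r$-decomposable if there exist $V_1,\dots,V_m\subseteq V$ with $|V_i|\le r$ and nonnegative supermodular $f_i:2^{V_i}\to\mathbb{R}_+$ with $f(S)=\sum_i f_i(S\cap V_i)$ for all $S$. The $\underline{k}$SPM problem asks for $S\subseteq V$ with $|S|\le k$ maximizing $f(S)$; approximation ratio $\rho$ means $\mathrm{OPT}\le\rho f(\text{output})$, constants in $O(\cdot)$ depending only on $r$. *)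

From HB Require Import structures.
From mathcomp Require Import all_boot all_order all_algebra.
Set Implicit Arguments. Unset Strict Implicit. Unset Printing Implicit Defensive.
Import Order.TTheory GRing.Theory Num.Theory.
Local Open Scope ring_scope.

Section Defs.
Variables (R : realFieldType) (V : finType).

Definition marg (f : {set V} -> R) (v : V) (S : {set V}) : R :=
  f (v |: S) - f S.

Definition supermodular (f : {set V} -> R) : Prop :=
  forall A B : {set V}, f A + f B <= f (A :|: B) + f (A :&: B).

Definition nonneg (f : {set V} -> R) : Prop := forall A : {set V}, 0 <= f A.

(* f_i : 2^{V_i} -> R_+ nonnegative supermodular, represented as a function on
   {set V} whose values/properties only matter on subsets of W. *)
Definition supermodular_on (W : {set V}) (g : {set V} -> R) : Prop :=
  forall A B : {set V}, A \subset W -> B \subset W ->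
    g A + g B <= g (A :|: B) + g (A :&: B).

Definition nonneg_on (W : {set V}) (g : {set V} -> R) : Prop :=
  forall A : {set V}, A \subset W -> 0 <= g A.

Definition decomposable (r : nat) (f : {set V} -> R) : Prop :=
  exists (m : nat) (Vs : 'I_m -> {set V}) (fs : 'I_m -> {set V} -> R),
    [/\ forall i, (#|Vs i| <= r)%N,
        forall i, nonneg_on (Vs i) (fs i),
        forall i, supermodular_on (Vs i) (fs i) &
        forall S, f S = \sum_(i < m) fs i (S :&: Vs i)].

Definition greedy_run (f : {set V} -> R) (k : nat) (S : nat -> {set V}) : Prop :=
  S #|V| = [set: V] /\
  forall i : nat, (k < i <= #|V|)%N ->
    exists2 v, v \in S i &
      (forall u, u \in S i -> marg f v (S i :\ v) <= marg f u (S i :\ u)) /\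
      S i.-1 = S i :\ v.

Definition greedy_output (f : {set V} -> R) (Sk : {set V}) : {set V} :=
  if f set0 <= f Sk then Sk else set0.

End Defs.

From HB Require Import structures.
From mathcomp Require Import all_boot all_order all_algebra.
From mathcomp Require Import zify ring lra.
Set Implicit Arguments. Unset Strict Implicit. Unset Printing Implicit Defensive.
Import Order.TTheory GRing.Theory Num.Theory.

(* Fix T with |T| <= k and put mu = f(T)/2k.  Discarding elements of T whose
   marginal is below mu loses at most f(T)/2 and leaves a core Y all of whose
   marginals are at least mu.  If Y survives in S_k, supermodularity gives
   f(Y) <= f(S_k) + f(∅).  Otherwise let s be the step at which the greedy first
   removes an element v of Y: v has the least marginal in S_s, and by
   supermodularity its marginal there dominates its marginal in Y, so every
   marginal in S_s is at least mu.  For an r-decomposable f the marginals in a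
   set S sum to at most r f(S); hence s mu <= r f(S_s), and at every greedy step
   (j - r) f(S_j) <= j f(S_(j-1)), which telescopes to
   k^_r f(S_s) <= s^_r f(S_k).  Since k^r <= r^r k^_r for k > r, this yields
   f(T) = 2 k mu <= 2 r^(r+1) (n/k)^(r-1) f(S_k). *)

Lemma ffact_le_expn (s n m : nat) : s <= n -> s ^_ m <= n ^ m.
Proof.
move=> le_sn; elim: m => [|m IHm]; first by rewrite ffactn0.
by rewrite ffactnSr expnSr leq_mul // (leq_trans (leq_subr _ _)).
Qed.

Lemma expn_le_ffact (r k m : nat) : m <= r -> r < k -> k ^ m <= r ^ m * k ^_ m.
Proof.
move=> le_mr lt_rk; elim: m le_mr => [|m IHm] lt_mr; first by rewrite ffactn0.
have le_k : k <= r * (k - m) by nia.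
rewrite expnS (leq_trans (leq_mul le_k (IHm (ltnW lt_mr)))) //.
by rewrite ffactnSr expnS; lia.
Qed.

Lemma ffact_ratio_le (r k s n : nat) : r < k -> k <= s -> s <= n ->
  k * r * s ^_ r * k ^ (r - 1) <= r ^ r.+1 * k ^_ r * s * n ^ (r - 1).
Proof.
case: r => [|r] lt_rk le_ks le_sn; first by rewrite muln0 !mul0n.
rewrite subSS subn0.
have low_k := expn_le_ffact (leqnn r.+1) lt_rk.
have up_s : s ^_ r.+1 <= s * n ^ r.
  by rewrite ffactnS leq_mul // ffact_le_expn // (leq_trans (leq_pred s)).
have -> : k * r.+1 * s ^_ r.+1 * k ^ r = r.+1 * k ^ r.+1 * s ^_ r.+1.
  by rewrite expnS; lia.
have -> : r.+1 ^ r.+2 * k ^_ r.+1 * s * n ^ r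
        = r.+1 * (r.+1 ^ r.+1 * k ^_ r.+1) * (s * n ^ r).
  by rewrite (expnS _ r.+1); lia.
by rewrite leq_mul // leq_mul.
Qed.

Local Open Scope ring_scope.

Section SetFunctions.
Variables (R : realFieldType) (V : finType) (f : {set V} -> R).

Lemma greedy_output_ge (X : {set V}) :
  f X <= f (greedy_output f X) /\ f set0 <= f (greedy_output f X).
Proof. by rewrite /greedy_output; case: ifPn => [//|]; rewrite -ltNge => /ltW. Qed.

Lemma marg_setD1 (S : {set V}) v : v \in S -> marg f v (S :\ v) = f S - f (S :\ v).
Proof. by move=> vS; rewrite /marg setD1K. Qed.

Lemma decomposable_sum_marg r (S : {set V}) :
  decomposable r f -> \sum_(u in S) marg f u (S :\ u) <= r%:R * f S.
Proof.
case=> m [W [g [cardW g_ge0 _ f_sum]]].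
under eq_bigr => u uS do rewrite marg_setD1 // !f_sum -sumrB.
rewrite f_sum exchange_big mulr_sumr; apply: ler_sum => i _ /=.
have g_SW_ge0 : 0 <= g i (S :&: W i) by rewrite g_ge0 ?subsetIr.
(* Only the at most r elements of W i move g i, each by at most g i (S :&: W i). *)
rewrite (bigID (mem (W i))) /= [X in _ + X]big1 ?addr0 => [|u /andP[_ uW]]; last first.
  suff -> : (S :\ u) :&: W i = S :&: W i by rewrite subrr.
  by apply/setP => x; rewrite !inE; case: eqP => // ->; rewrite (negbTE uW) !andbF.
apply: (le_trans (y := \sum_(u in S | u \in W i) g i (S :&: W i))).
  by apply: ler_sum => u _; rewrite gerBl g_ge0 // subsetIr.
rewrite sumr_const -[X in X <= _]mulr_natl ler_wpM2r // ler_nat.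
rewrite (leq_trans _ (cardW i)) //.
by apply/subset_leq_card/subsetP => x; rewrite unfold_in => /andP[].
Qed.

Lemma decomposable_card_marg r (S : {set V}) mu : decomposable r f ->
  {in S, forall u, mu <= marg f u (S :\ u)} -> #|S|%:R * mu <= r%:R * f S.
Proof.
move=> decf mu_le; rewrite mulr_natl -sumr_const.
exact: le_trans (ler_sum _ mu_le) (decomposable_sum_marg _ decf).
Qed.

Lemma peel_small_marg mu (X : {set V}) : 0 <= mu ->
  exists2 Y, f X - #|X|%:R * mu <= f Y & {in Y, forall v, mu <= marg f v (Y :\ v)}.
Proof.
move=> mu_ge0; elim: {X}#|X| {-2}X (erefl #|X|) => [|c IHc] X cardX.
  by exists X => [|v vX]; [rewrite gerBl mulr_ge0 | move: cardX; rewrite (cardD1 v) vX].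
have [/exists_inP[v vX small_v] | large] := boolP [exists v in X, marg f v (X :\ v) < mu].
  have cardXv : #|X :\ v| = c by move: cardX; rewrite (cardsD1 v) vX => -[].
  have [Y le_Y marg_Y] := IHc _ cardXv.
  exists Y => //; move: small_v le_Y; rewrite marg_setD1 // cardX cardXv -addn1 natrD.
  by move=> *; lra.
exists X => [|v vX]; first by rewrite gerBl mulr_ge0.
by rewrite leNgt; apply: contra large => small_v; apply/exists_inP; exists v.
Qed.

Hypotheses (f_ge0 : nonneg f) (f_super : supermodular f).

Lemma supermodular_margS (A B : {set V}) v :
  A \subset B -> v \notin B -> marg f v A <= marg f v B.
Proof.
move=> AB vB; have := f_super (v |: A) B.
rewrite -setUA (setUidPr AB) setIUl (setIidPl AB).
have -> : [set v] :&: B = set0 by apply/disjoint_setI0; rewrite disjoints1.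
by rewrite set0U /marg => ?; lra.
Qed.

Lemma supermodular_subset_le (A B : {set V}) : A \subset B -> f A <= f B + f set0.
Proof.
move=> AB; have := f_super A (B :\: A).
have -> : A :|: (B :\: A) = B by rewrite -{1}(setIidPr AB) setID.
have -> : A :&: (B :\: A) = set0.
  by apply/setP => x; rewrite !inE; case: (x \in A); rewrite ?andbF.
by move=> le_sum; apply: le_trans le_sum; rewrite lerDl f_ge0.
Qed.

End SetFunctions.

Section BackwardGreedy.
Variables (R : realFieldType) (V : finType) (f : {set V} -> R) (r k : nat).
Variable S : nat -> {set V}.
Hypothesis greedyS : greedy_run f k S.

Lemma card_greedy j : (k <= j <= #|V|)%N -> #|S j| = j.
Proof.
case: greedyS => S_top step /andP[le_kj le_jn].
move: le_kj; rewrite -(subKn le_jn); elim: (#|V| - j)%N (leq_subr j #|V|) => [|d IHd] le_dn le_k.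
  by rewrite subn0 S_top cardsT.
have [v vS [_ Sv]] := step (#|V| - d)%N (ltac:(lia)).
have := IHd (ltnW le_dn) (ltac:(lia)); rewrite (cardsD1 v) vS subnS Sv; lia.
Qed.

Lemma greedy_keeps_or_removes d (T : {set V}) :
  (k + d <= #|V|)%N -> T \subset S (k + d) ->
  T \subset S k \/
  exists s v, [/\ (k < s <= #|V|)%N, T \subset S s, v \in T &
                  {in S s, forall u, marg f v (S s :\ v) <= marg f u (S s :\ u)}].
Proof.
elim: d => [|d IHd] le_kdn TS; first by left; rewrite addn0 in TS.
have [v vS [v_min Sv]] := proj2 greedyS (k + d.+1)%N (ltac:(lia)).
have [vT | vNT] := boolP (v \in T).
  by right; exists (k + d.+1)%N, v; split => //; lia.
apply: IHd; first lia.
rewrite addnS /= in Sv TS; apply/subsetP => x xT.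
by rewrite Sv !inE (subsetP TS x xT) andbT; apply: contraNneq vNT => <-.
Qed.

Hypotheses (decf : decomposable r f) (lt_rk : (r < k)%N).

Lemma greedy_step j : (k < j <= #|V|)%N ->
  (j%:R - r%:R) * f (S j) <= j%:R * f (S j.-1).
Proof.
move=> lt_kjn; have [v vS [v_min Sv]] := proj2 greedyS j lt_kjn.
have := decomposable_card_marg decf v_min.
by rewrite card_greedy ?marg_setD1 -?Sv //; [nra | lia].
Qed.

Lemma greedy_ffact_step j : (k < j <= #|V|)%N ->
  (j.-1 ^_ r)%:R * f (S j) <= (j ^_ r)%:R * f (S j.-1).
Proof.
move=> lt_kjn; have j_gt0 : 0 < j%:R :> R by rewrite ltr0n; lia.
rewrite -(ler_pM2l j_gt0) !mulrA -natrM -ffactnS ffactnSr natrM -mulrA.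
rewrite -mulrA [X in _ <= X]mulrCA ler_wpM2l // natrB; last lia.
exact: greedy_step.
Qed.

Lemma greedy_ffact_chain s : (k <= s <= #|V|)%N ->
  (k ^_ r)%:R * f (S s) <= (s ^_ r)%:R * f (S k).
Proof.
elim: s => [|s IHs] /andP[le_ks le_sn]; first lia.
move: le_ks; rewrite leq_eqVlt => /orP[/eqP <- // | lt_ks].
have step := greedy_ffact_step (ltac:(lia) : (k < s.+1 <= #|V|)%N).
have ffs_gt0 : 0 < (s ^_ r)%:R :> R by rewrite ltr0n ffact_gt0; lia.
rewrite -(ler_pM2l ffs_gt0) [X in X <= _]mulrCA.
apply: le_trans (ler_wpM2l (ler0n _ _) step) _.
rewrite mulrCA [X in _ <= X]mulrCA ler_wpM2l //.
exact: IHs (ltac:(lia)).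
Qed.

Hypothesis f_ge0 : nonneg f.

Lemma greedy_marg_bound s mu : (k < s <= #|V|)%N ->
  s%:R * mu <= r%:R * f (S s) ->
  k%:R * mu <= (r ^ r.+1)%:R * (#|V|%:R ^+ (r - 1) / k%:R ^+ (r - 1)) * f (S k).
Proof.
move=> /andP[lt_ks le_sn] smu_le.
have chain := greedy_ffact_chain (ltac:(lia) : (k <= s <= #|V|)%N).
have ratio : ((k * r * s ^_ r * k ^ (r - 1))%:R * f (S k) <=
              (r ^ r.+1 * k ^_ r * s * #|V| ^ (r - 1))%:R * f (S k) :> R).
  by rewrite ler_wpM2r // ler_nat ffact_ratio_le //; lia.
rewrite !natrM !natrX in ratio *.
set K := (k ^_ r)%:R in chain ratio *; set Fs := (s ^_ r)%:R in chain ratio.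
have kp_gt0 : 0 < k%:R ^+ (r - 1) :> R by rewrite exprn_gt0 // ltr0n; lia.
have Ks_gt0 : 0 < K * s%:R by rewrite mulr_gt0 // ltr0n ?ffact_gt0; lia.
rewrite mulrA mulrAC ler_pdivlMr // -(ler_pM2l Ks_gt0).
have -> : K * s%:R * (r%:R ^+ r.+1 * #|V|%:R ^+ (r - 1) * f (S k))
        = r%:R ^+ r.+1 * K * s%:R * #|V|%:R ^+ (r - 1) * f (S k) by ring.
refine (le_trans _ ratio).
have -> : K * s%:R * (k%:R * mu * k%:R ^+ (r - 1))
        = k%:R * k%:R ^+ (r - 1) * (K * (s%:R * mu)) by ring.
have -> : k%:R * r%:R * Fs * k%:R ^+ (r - 1) * f (S k)
        = k%:R * k%:R ^+ (r - 1) * (r%:R * (Fs * f (S k))) by ring.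
apply: ler_wpM2l; first by rewrite mulr_ge0 ?ler0n ?ltW.
apply: le_trans (ler_wpM2l (ler0n _ _) smu_le) _.
by rewrite mulrCA ler_wpM2l.
Qed.

Hypothesis f_super : supermodular f.

Lemma greedy_core_bound (T : {set V}) mu : (k <= #|V|)%N ->
  {in T, forall v, mu <= marg f v (T :\ v)} ->
  T \subset S k \/
  k%:R * mu <= (r ^ r.+1)%:R * (#|V|%:R ^+ (r - 1) / k%:R ^+ (r - 1)) * f (S k).
Proof.
move=> le_kn T_marg.
have := greedy_keeps_or_removes (d := #|V| - k) (T := T).
rewrite subnKC // (proj1 greedyS) subsetT => /(_ (leqnn _) isT).
case=> [|[s [v [lt_ksn TS vT v_min]]]]; first by left.
right; apply: (greedy_marg_bound lt_ksn).
rewrite -{1}(card_greedy (j := s)); last lia.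
apply: decomposable_card_marg decf _ => u uS.
apply: le_trans (v_min u uS); apply: le_trans (T_marg v vT) _.
by apply: supermodular_margS; rewrite ?setSD // !inE eqxx.
Qed.
End BackwardGreedy.

Theorem corollary5 (r : nat) :
  exists C : nat, forall (R : realFieldType) (V : finType) (f : {set V} -> R)
    (k : nat) (S : nat -> {set V}),
    nonneg f -> supermodular f -> decomposable r f ->
    (r < k)%N -> (k <= #|V| - 1)%N ->
    greedy_run f k S ->
    forall T : {set V}, (#|T| <= k)%N ->
      f T <= C%:R * (#|V|%:R ^+ (r - 1) / k%:R ^+ (r - 1))
                 * f (greedy_output f (S k)).
Proof.
exists (4 + 2 * r ^ r.+1)%N => R V f k S f_ge0 f_super f_dec lt_rk le_kn_pred greedyS T le_Tk.
have le_kn : (k <= #|V|)%N by lia.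
have k_gt0 : 0 < k%:R :> R by rewrite ltr0n; lia.
set Q := _ / _; have Q_ge1 : 1 <= Q.
  by rewrite ler_pdivlMr ?exprn_gt0 // mul1r lerXn2r ?nnegrE ?ler_nat.
have [le_Sk_out le_0_out] := greedy_output_ge f (S k).
set out := f (greedy_output f (S k)) in le_Sk_out le_0_out *.
set mu := f T / (2 * k%:R).
have mu_ge0 : 0 <= mu by rewrite divr_ge0 ?mulr_ge0 ?ler0n.
have kmu_half : k%:R * mu = f T / 2 by rewrite /mu; field; rewrite lt0r_neq0.
have [Y le_TY Y_marg] := peel_small_marg f T mu_ge0.
have fT_le : f T <= 2 * f Y.
  have : #|T|%:R * mu <= k%:R * mu by rewrite ler_wpM2r // ler_nat.
  by lra.
have c_ge0 : 0 <= (r ^ r.+1)%:R :> R := ler0n _ _.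
have out_ge0 : 0 <= out := le_trans (f_ge0 _) le_0_out.
have out_le : out <= Q * out by rewrite ler_peMl.
rewrite natrD natrM -mulrA.
have [YSk | kmu_le] := greedy_core_bound greedyS f_dec lt_rk f_ge0 f_super le_kn Y_marg.
  have := supermodular_subset_le f_ge0 f_super YSk; nra.
rewrite -/Q in kmu_le.
have := ler_wpM2l (mulr_ge0 c_ge0 (le_trans ler01 Q_ge1)) le_Sk_out; nra.
Qed.
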